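(* Let $X$ be an irreducible positive recurrent Markov chain on a countable state space $S$ with transition matrix $P$ and stationary distribution $\pi$. Fix a finite nonempty $K\subseteq S$ and finite sets $A_n\supseteq K$ with $A_n\nearrow S$. For each $n$ let $T_n=\inf\{j\ge1:X_j\notin A_n\}$, $T_K=\inf\{j\ge1:X_j\in K\}$, and assume the matrix $G_n(x,y)=P_x(X_{T_K}=y,\,T_K<T_n)$, $x,y\in K$, is irreducible. Let $u_n(x)=P_x(T_K<T_n)$ for $x\in A_n$, $S_n'=\{x\in A_n:u_n(x)>0\}$, and define the stochastic matrix $R_n$ on $S_n'$ by $R_n(x,y)=P(x,y)/u_n(x)$ for $x\in S_n'$, $y\in K$, and $R_n(x,y)=P(x,y)u_n(y)/u_n(x)$ for $x\in S'_n$, $y\in S'_n\setminus K$. Let $S_n''\supseteq K$ be the unique closed communicating class of $R_n$, and let $\pi^*_{3n}$ be the unique stationary distribution of $R_n$ restricted to $S_n''$, extended to $S$ by $\pi^*_{3n}(x)=0$ for $x\notin S_n''$. Then for each $x\in S$, $\pi^*_{3n}(x)\to\pi(x)$ as $n\to\infty$.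
   Context: $P_x$ denotes the law of the chain started at $x$. Under the irreducibility of $G_n$, $S_n'$ contains a single closed communicating class of $R_n$, which contains $K$, and $R_n$ restricted to it is irreducible; $R_n$ describes the dynamics of $X$ conditioned on $T_K<T_n$. *)

From HB Require Import structures.
From mathcomp Require Import all_boot all_order all_algebra.
From mathcomp Require Import all_classical all_reals all_analysis.
Set Implicit Arguments. Unset Strict Implicit. Unset Printing Implicit Defensive.
Import Order.TTheory GRing.Theory Num.Theory.
Local Open Scope classical_set_scope.
Local Open Scope ring_scope.

Section MC.
Variables (R : realType) (T : countType).
Implicit Types (P : T -> T -> R).

Definition stochastic P : Prop :=
  (forall x y, 0 <= P x y) /\ (forall x, \esum_(y in [set: T]) (P x y)%:E = 1%E).

Definition leads_to P (x y : T) : Prop :=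
  exists s : seq T, path (fun a b => 0 < P a b) x s /\ last x s = y.

Definition irreducible P : Prop := forall x y, leads_to P x y.

(* taboo P B m x y = P_x(X_{m+1} = y, X_1, ..., X_m \in B). *)
Fixpoint taboo P (B : set T) (m : nat) (x y : T) : \bar R :=
  match m with
  | 0 => (P x y)%:E
  | m'.+1 => \esum_(z in B) ((P x z)%:E * taboo P B m' z y)%E
  end.

(* P_x(T_x = m+1), T_x = inf {j >= 1 : X_j = x} *)
Definition first_return P (x : T) (m : nat) : \bar R :=
  taboo P (~` [set x]) m x x.

Definition positive_recurrent P : Prop :=
  forall x, \esum_(m in [set: nat]) first_return P x m = 1%E /\
            (\esum_(m in [set: nat]) ((m.+1)%:R%:E * first_return P x m)%E < +oo)%E.

Definition stationary_distribution P (pi : T -> R) : Prop :=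
  (forall x, 0 <= pi x) /\ \esum_(x in [set: T]) (pi x)%:E = 1%E /\
  (forall y, \esum_(x in [set: T]) (pi x * P x y)%:E = (pi y)%:E).

(* G_A(x,y) = P_x(X_{T_K} = y, T_K < T_A), where T_K = inf{j>=1 : X_j \in K},
   T_A = inf{j>=1 : X_j \notin A}, and K `<=` A. *)
Definition Gmat P (K A : set T) (x y : T) : \bar R :=
  \esum_(m in [set: nat]) taboo P (A `\` K) m x y.

(* u_A(x) = P_x(T_K < T_A) *)
Definition uvec P (K A : set T) (x : T) : \bar R :=
  \esum_(m in [set: nat]) \esum_(y in K) taboo P (A `\` K) m x y.

Definition irreducible_on (K : set T) (M : T -> T -> \bar R) : Prop :=
  forall x y, K x -> K y ->
    exists s : seq T, all (fun z => `[< K z >]) s /\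
      path (fun a b => (0 < M a b)%E) x s /\ last x s = y.

Definition Sprime P (K A : set T) : set T :=
  [set x | A x /\ (0 < uvec P K A x)%E].

Definition Rmat P (K A : set T) (x y : T) : R :=
  let u := fun z => fine (uvec P K A z) in
  if `[< Sprime P K A x >] && `[< Sprime P K A y >] then
    (if `[< K y >] then P x y / u x else P x y * u y / u x)
  else 0.

Definition closed_comm_class (S : set T) (Q : T -> T -> R) (C : set T) : Prop :=
  C `<=` S /\ C !=set0 /\
  (forall x y, C x -> C y -> leads_to Q x y) /\
  (forall x y, C x -> S y -> 0 < Q x y -> C y).

Definition stationary_on (C : set T) (Q : T -> T -> R) (p : T -> R) : Prop :=
  (forall x, 0 <= p x) /\ (forall x, ~ C x -> p x = 0) /\
  \esum_(x in C) (p x)%:E = 1%E /\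
  (forall y, C y -> \esum_(x in C) (p x * Q x y)%:E = (p y)%:E).

End MC.

From HB Require Import structures.
From mathcomp Require Import all_boot all_order all_algebra.
From mathcomp Require Import all_classical all_reals all_analysis.
From mathcomp Require Import ring lra.
Set Implicit Arguments. Unset Strict Implicit. Unset Printing Implicit Defensive.
Import Order.TTheory GRing.Theory Num.Theory.
Import numFieldNormedType.Exports.
Local Open Scope classical_set_scope.
Local Open Scope ring_scope.

(* Fix [n] and write [u] for [u_n], [p] for [pi*_3n] and
   [e_n := sum_(k in K) pi(k) (1 - u(k))].  On the closed class the tilted
   measure [p / u] is [P]-invariant off [K] and [P]-subinvariant on [K], so by a
   maximum principle the ratio [p / (u pi)] attains its maximum [M >= 1] at some
   [k0] in [K].  Then [w := p / (u M)] satisfies [w <= pi], [w k0 = pi k0],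
   [u w <= p], and [pi - w] is [P]-subinvariant up to the error [e_n];
   propagating this along a fixed positive path from [y] to [k0] gives
   [pi y - p y <= C_y e_n + (1 - u y)].  Stationarity of [pi] bounds [e_n] by the
   [pi]-mass leaving [A_n] in one step, which tends to [0], and [e_n] also
   controls [1 - u y]; hence [liminf p_n(y) >= pi(y)] for every [y], and since
   each [p_n] has total mass one, [p_n(y) -> pi(y)]. *)

Section FiniteSums.
Variables (R : realType) (T : choiceType).

Definition enum_set (D : set T) : seq T := finmap.enum_fset (fset_set D).

Lemma enum_set_uniq D : uniq (enum_set D).
Proof. exact: finmap.fset_uniq. Qed.

Lemma mem_enum_set D x : finite_set D -> (x \in enum_set D) = (x \in D).
Proof. move=> fD; exact: (in_fset_set fD x). Qed.

Lemma esum_enum_set (D : set T) (f : T -> \bar R) : finite_set D ->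
  (forall x, D x -> (0 <= f x)%E) -> \esum_(x in D) f x = \sum_(x <- enum_set D) f x.
Proof.
by move=> fD f0; rewrite esum_fset ?fsbig_finite // => x /set_mem; exact: f0.
Qed.

Lemma sum_le_esum (D : set T) (s : seq T) (f : T -> R) : uniq s ->
  {subset s <= D} -> ((\sum_(x <- s) f x)%:E <= \esum_(x in D) (f x)%:E)%E.
Proof.
move=> us sD; apply: esum_ge; exists [set` s]; first by split => // x /sD /set_mem.
by rewrite -fsbig_seq // sumEFin.
Qed.

Lemma esum_gt_sum (D : set T) (f : T -> R) (l eps : R) :
  \esum_(x in D) (f x)%:E = l%:E -> 0 < eps ->
  exists s : seq T, [/\ uniq s, {subset s <= D} & l - eps < \sum_(x <- s) f x].
Proof.
move=> fl eps0; have : ((l - eps)%:E < \esum_(x in D) (f x)%:E)%E.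
  by rewrite fl lte_fin gtrBl.
move=> /ereal_sup_gt [_ [X [finX XD] <-]]; rewrite fsbig_finite // sumEFin lte_fin.
exists (enum_set X); split => //; first exact: enum_set_uniq.
by move=> x; rewrite mem_enum_set // => /set_mem /XD /mem_set.
Qed.

Lemma ler_sum_subseq (s t : seq T) (f : T -> R) : uniq s -> uniq t ->
  {subset s <= t} -> (forall x, x \in t -> 0 <= f x) ->
  \sum_(x <- s) f x <= \sum_(x <- t) f x.
Proof.
move=> us ut st f0.
have -> : \sum_(x <- s) f x = \sum_(x <- t | x \in s) f x.
  rewrite -[RHS]big_filter; apply: perm_big; apply: uniq_perm; rewrite ?filter_uniq //.
  by move=> x; rewrite mem_filter; apply/idP/andP => [xs|[]//]; split => //; exact: st.
rewrite [leRHS](bigID (mem s)) /= lerDl big_seq_cond.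
by apply: sumr_ge0 => x /andP[/f0].
Qed.

Lemma ler_sum_term (s : seq T) (f : T -> R) x : x \in s ->
  (forall y, y \in s -> 0 <= f y) -> f x <= \sum_(y <- s) f y.
Proof.
move=> xs f0; rewrite (big_rem x xs) /= lerDl big_seq.
by apply: sumr_ge0 => y /mem_rem /f0.
Qed.

Lemma sum_le_of_esum (D : set T) (f : T -> R) (l : R) (s : seq T) :
  \esum_(x in D) (f x)%:E = l%:E -> uniq s -> {subset s <= D} ->
  \sum_(x <- s) f x <= l.
Proof. by move=> fl us sD; rewrite -lee_fin -fl sum_le_esum. Qed.

Lemma exists_argmax_seq (s : seq T) (f : T -> R) x0 : x0 \in s ->
  exists2 x, x \in s & forall y, y \in s -> f y <= f x.
Proof.
elim: s x0 => [//|a s IH] x0 _; have [s0|] := eqVneq s [::].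
  by exists a; rewrite ?mem_head // s0 => y; rewrite mem_seq1 => /eqP->.
case: s IH => [//|b s] /(_ b (mem_head b s))[x xs fx] _.
have [fax|fxa] := leP (f a) (f x).
  by exists x => [|y]; rewrite in_cons ?xs ?orbT // => /orP[/eqP->|/fx].
exists a => [|y]; rewrite ?mem_head // in_cons => /orP[/eqP->//|/fx fyx].
exact: le_trans fyx (ltW fxa).
Qed.

End FiniteSums.

Lemma near_all_seq (T : eqType) (Q : nat -> T -> Prop) (s : seq T) :
  (forall y, y \in s -> \forall n \near \oo, Q n y) ->
  \forall n \near \oo, forall y, y \in s -> Q n y.
Proof.
elim: s => [|a s IH] h; first exact: nearW.
apply: filterS2 (h a (mem_head a s)) (IH (fun y ys => h y (@mem_behead _ (a :: s) y ys))).
by move=> n Qa Qs y; rewrite in_cons => /orP[/eqP->|/Qs].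
Qed.

(* Scheffe-type argument: any excess of [p n x] over [pi x] is missing from a
   finite set carrying almost all the mass of [pi]. *)
Lemma cvg_of_liminf_ge (R : realType) (T : choiceType) (pi : T -> R) (p : nat -> T -> R) :
  (forall x, 0 <= pi x) -> \esum_(x in [set: T]) (pi x)%:E = 1%E ->
  (forall n s, uniq s -> \sum_(x <- s) p n x <= 1) ->
  (forall y eps, 0 < eps -> \forall n \near \oo, pi y - eps <= p n y) ->
  forall x, p n x @[n --> \oo] --> pi x.
Proof.
move=> pi0 pi1 p_le1 liminf x; apply/cvgrPdist_le => eps eps0.
have d0 : 0 < eps / 2 by rewrite divr_gt0.
have [s0 [us0 _ s0_gt]] := esum_gt_sum pi1 d0.
set s := undup (x :: s0); have us : uniq s := undup_uniq _.
have xs : x \in s by rewrite mem_undup mem_head.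
have s_gt : 1 - eps / 2 < \sum_(y <- s) pi y.
  apply: lt_le_trans s0_gt (ler_sum_subseq us0 us _ (fun y _ => pi0 y)).
  by move=> y ys0; rewrite mem_undup in_cons ys0 orbT.
set r := rem x s; set c := eps / 2 / ((size r)%:R + 1).
have c0 : 0 < c by rewrite divr_gt0 // ltr_wpDl.
have rc : c *+ size r <= eps / 2.
  rewrite -mulr_natr /c mulrAC ler_pdivrMr ?ltr_wpDl //.
  by rewrite ler_wpM2l ?(ltW d0) // lerDl.
near=> n.
have lower_r : forall y, y \in r -> pi y - c <= p n y.
  by near: n; exact: near_all_seq (fun y _ => liminf y c c0).
have lower_x : pi x - eps <= p n x by near: n; exact: liminf.
have sum_r : \sum_(y <- r) pi y - c *+ size r <= \sum_(y <- r) p n y.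
  have -> : c *+ size r = \sum_(y <- r) c by rewrite big_const_seq count_predT iter_addr_0.
  by rewrite -sumrB big_seq [leRHS]big_seq ler_sum.
have := p_le1 n s us; move: s_gt; rewrite !(big_rem x xs) /= -/r.
by rewrite ler_distlC; lra.
Unshelve. all: by end_near.
Qed.

Section PositivePaths.
Variables (R : realType) (T : eqType) (P : T -> T -> R).
Local Notation pos := (fun a b => 0 < P a b).

Lemma path_backward_bound (x0 : T) (s : seq T) : path pos x0 s ->
  exists2 C : R, 0 <= C & forall (d : T -> R) (e : R),
    (forall a b, d a * P a b <= d b + e) -> (forall z, 0 <= d z) -> 0 <= e ->
    d x0 <= C * (d (last x0 s) + e).
Proof.
elim: s x0 => [|y s IH] x0 /=.
  by move=> _; exists 1 => // d e _ d0 e0; rewrite mul1r lerDl.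
move=> /andP[Pxy /IH[C C0 HC]]; exists ((C + 1) / P x0 y).
  by rewrite divr_ge0 ?addr_ge0 ?(ltW Pxy).
move=> d e hd d0 e0; rewrite mulrAC ler_pdivlMr //.
have := hd x0 y; have := HC d e hd d0 e0; have := d0 (last y s); nra.
Qed.

Lemma path_forward_bound (x0 : T) (s : seq T) : path pos x0 s ->
  exists2 C : R, 0 <= C & forall (v : T -> R) (e : R) (Q : pred T),
    (forall a b, Q b -> v b * P a b <= v a + e) -> all Q s ->
    (forall z, 0 <= v z) -> 0 <= e ->
    v (last x0 s) <= C * (v x0 + e).
Proof.
elim: s x0 => [|y s IH] x0 /=.
  by move=> _; exists 1 => // v e Q _ _ v0 e0; rewrite mul1r lerDl.
move=> /andP[Pxy /IH[C C0 HC]]; exists (C * ((P x0 y)^-1 + 1)).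
  by rewrite mulr_ge0 // addr_ge0 // invr_ge0 ltW.
move=> v e Q hv /andP[Qy Qs] v0 e0; apply: le_trans (HC v e Q hv Qs v0 e0) _.
have vy : v y <= (P x0 y)^-1 * (v x0 + e) by rewrite mulrC ler_pdivlMr // hv.
have := v0 x0; have := v0 y; have := invr_gt0 (P x0 y); rewrite Pxy; nra.
Qed.

Lemma path_last_visit (Q : pred T) (r : rel T) (x0 : T) (s : seq T) :
  path r x0 s -> exists k s',
    [/\ k = x0 \/ Q k, all (predC Q) s', path r k s' & last k s' = last x0 s].
Proof.
elim: s x0 => [|y s IH] x0 /=; first by move=> _; exists x0, [::]; split => //; left.
move=> /andP[rxy /IH[k [s' [[->|Qk] Qs' hp <-]]]]; last by exists k, s'; split => //; right.
case Qy: (Q y); first by exists y, s'; split => //; right.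
by exists x0, (y :: s'); split; [left | rewrite /= Qy | rewrite /= rxy |].
Qed.

End PositivePaths.

Lemma sum_stationary_on_le1 (R : realType) (T : countType) (C : set T)
    (Q : T -> T -> R) (p : T -> R) (s : seq T) :
  stationary_on C Q p -> uniq s -> \sum_(x <- s) p x <= 1.
Proof.
move=> [_ [p_out [p1 _]]] us; rewrite (bigID (mem C)) /= [X in _ + X]big1 ?addr0.
  rewrite -big_filter; apply: sum_le_of_esum p1 _ _; first exact: filter_uniq.
  by move=> x; rewrite mem_filter => /andP[].
by move=> x /negP xC; apply: p_out => /mem_set.
Qed.

Section Chain.
Variables (R : realType) (T : countType) (P : T -> T -> R).
Hypothesis hP : stochastic P.

Lemma P_ge0 x y : 0 <= P x y. Proof. exact: hP.1. Qed.

Lemma sum_P_le1 x (s : seq T) : uniq s -> \sum_(y <- s) P x y <= 1.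
Proof. by move=> us; apply: (sum_le_of_esum (hP.2 x)) => // y _; exact: in_setT. Qed.

Lemma sum_P_gt x eps : 0 < eps ->
  exists2 s : seq T, uniq s & 1 - eps < \sum_(y <- s) P x y.
Proof. by move=> eps0; have [s [us _]] := esum_gt_sum (hP.2 x) eps0; exists s. Qed.

Fixpoint tabooR (B : set T) (m : nat) (x y : T) : R :=
  if m is m'.+1 then \sum_(z <- enum_set B) P x z * tabooR B m' z y else P x y.

Lemma tabooR_ge0 B m x y : 0 <= tabooR B m x y.
Proof.
elim: m x y => [|m IH] x y /=; first exact: P_ge0.
by apply: sumr_ge0 => z _; rewrite mulr_ge0 ?P_ge0.
Qed.

Lemma tabooE B m x y : finite_set B -> taboo P B m x y = (tabooR B m x y)%:E.
Proof.
move=> fB; elim: m x y => [//|m IH] x y /=.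
rewrite esum_enum_set // -?sumEFin; last first.
  by move=> z _; rewrite IH lee_fin mulr_ge0 ?P_ge0 ?tabooR_ge0.
by apply: eq_bigr => z _; rewrite IH.
Qed.

Variable pi : T -> R.
Hypothesis hpi : stationary_distribution P pi.

Lemma pi_ge0 x : 0 <= pi x. Proof. exact: hpi.1. Qed.

Lemma sum_pi_le1 s : uniq s -> \sum_(x <- s) pi x <= 1.
Proof. by move=> us; apply: (sum_le_of_esum hpi.2.1) => // y _; exact: in_setT. Qed.

Lemma pi_le1 x : pi x <= 1.
Proof. by have := @sum_pi_le1 [:: x]; rewrite big_seq1; apply. Qed.

Lemma sum_pi_gt eps : 0 < eps -> exists2 s : seq T, uniq s & 1 - eps < \sum_(x <- s) pi x.
Proof. by move=> eps0; have [s [us _]] := esum_gt_sum hpi.2.1 eps0; exists s. Qed.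

Lemma sum_piP_le s y : uniq s -> \sum_(x <- s) pi x * P x y <= pi y.
Proof. by move=> us; apply: (sum_le_of_esum (hpi.2.2 y)) => // z _; exact: in_setT. Qed.

Lemma pi_gt0 : irreducible P -> forall x, 0 < pi x.
Proof.
move=> hirr x; have [x0 pix0] : exists x0, 0 < pi x0.
  apply: contrapT => pi0; suff : \esum_(x in [set: T]) (pi x)%:E = 0%E.
    by rewrite hpi.2.1 => /eqP; rewrite eqe oner_eq0.
  apply: esum1 => y _; congr EFin; apply/eqP; rewrite eq_le pi_ge0 andbT.
  by rewrite leNgt; apply/negP => piy; apply: pi0; exists y.
have [s [+ <-]] := hirr x0 x.
elim: s x0 pix0 => [//|y s IH] x0 pix0 /= /andP[Px0y]; apply: IH.
apply: lt_le_trans (sum_piP_le y (s := [:: x0]) erefl).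
by rewrite big_seq1 mulr_gt0.
Qed.

Lemma pi_minorant_step (S : set T) (w : T -> R) a b : finite_set S ->
  (forall x, 0 <= w x <= pi x) -> (forall x, ~ S x -> w x = 0) ->
  (pi a - w a) * P a b <= pi b - \sum_(x <- enum_set S) w x * P x b.
Proof.
move=> fS wb w0.
have piw_ge0 x : 0 <= (pi x - w x) * P x b.
  by have /andP[_ wpi] := wb x; rewrite mulr_ge0 ?P_ge0 ?subr_ge0.
have [Sa|nSa] := pselect (S a).
  have aS : a \in enum_set S by rewrite mem_enum_set // mem_set.
  apply: le_trans (ler_sum_term aS (fun x _ => piw_ge0 x)) _.
  under eq_bigr => x _ do rewrite mulrBl.
  by rewrite sumrB lerB // sum_piP_le // enum_set_uniq.
have us : uniq (a :: enum_set S).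
  by rewrite /= enum_set_uniq mem_enum_set // andbT; apply/negP => /set_mem.
have := sum_piP_le b us; rewrite big_cons w0 // subr0.
have : \sum_(x <- enum_set S) w x * P x b <= \sum_(x <- enum_set S) pi x * P x b.
  by apply: ler_sum => x _; rewrite ler_wpM2r ?P_ge0 //; have /andP[] := wb x.
lra.
Qed.

Section Absorption.
Variables (K A : set T).
Hypotheses (fA : finite_set A) (KA : K `<=` A).
Let B := A `\` K.
Let fB : finite_set B. Proof. exact: sub_finite_set (@subDsetl _ A K) fA. Qed.
Let fK : finite_set K. Proof. exact: sub_finite_set KA fA. Qed.

(* [hit_prob x m] = P_x(T_K = m + 1 < T_A). *)
Definition hit_prob x m := \sum_(y <- enum_set K) tabooR B m x y.
Definition absorb x := fine (uvec P K A x).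

Lemma hit_prob_ge0 x m : 0 <= hit_prob x m.
Proof. by apply: sumr_ge0 => y _; exact: tabooR_ge0. Qed.

Lemma hit_probS x m : hit_prob x m.+1 = \sum_(z <- enum_set B) P x z * hit_prob z m.
Proof. by rewrite /hit_prob /= exchange_big; apply: eq_bigr => z _; rewrite mulr_sumr. Qed.

Lemma uvec_series x : uvec P K A x = (\sum_(m <oo) (hit_prob x m)%:E)%E.
Proof.
rewrite nneseries_esumT; last by move=> m; rewrite lee_fin hit_prob_ge0.
apply: eq_esum => m _; rewrite esum_enum_set //; last first.
  by move=> y _; rewrite tabooE // lee_fin tabooR_ge0.
by rewrite -sumEFin; apply: eq_bigr => y _; rewrite tabooE.
Qed.

Lemma uniq_enum_K_B : uniq (enum_set K ++ enum_set B).
Proof.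
rewrite cat_uniq !enum_set_uniq /= andbT; apply/hasPn => z.
by rewrite !mem_enum_set // => /set_mem[_ nKz]; apply/negP => /set_mem.
Qed.

Lemma sum_P_K_B_le1 x : \sum_(y <- enum_set K) P x y + \sum_(z <- enum_set B) P x z <= 1.
Proof. by rewrite -big_cat sum_P_le1 // uniq_enum_K_B. Qed.

Lemma sum_enum_A (g : T -> R) :
  \sum_(z <- enum_set A) g z = \sum_(z <- enum_set K) g z + \sum_(z <- enum_set B) g z.
Proof.
rewrite -big_cat; apply/perm_big/uniq_perm; rewrite ?enum_set_uniq ?uniq_enum_K_B //.
move=> z; rewrite mem_cat !mem_enum_set //; apply/idP/orP => [/set_mem Az|].
  by have [Kz|nKz] := pselect (K z); [left | right]; apply: mem_set.
by case=> /set_mem => [/KA|[]] /mem_set.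
Qed.

Lemma sum_hit_prob_le1 N x : \sum_(m < N) hit_prob x m <= 1.
Proof.
elim: N x => [|N IH] x; first by rewrite big_ord0.
rewrite big_ord_recl; under eq_bigr => i _ do rewrite lift0 hit_probS.
rewrite exchange_big /=; under eq_bigr => z _ do rewrite -mulr_sumr.
apply: le_trans (sum_P_K_B_le1 x); rewrite lerD // ler_sum // => z _.
by rewrite ler_piMr ?P_ge0.
Qed.

Lemma uvecE x : uvec P K A x = (absorb x)%:E /\ 0 <= absorb x <= 1.
Proof.
have u_le1 : (uvec P K A x <= 1)%E.
  rewrite uvec_series; apply: lime_le.
    by apply: is_cvg_nneseries => m _; rewrite lee_fin hit_prob_ge0.
  by apply: nearW => N /=; rewrite sumEFin lee_fin big_mkord sum_hit_prob_le1.
have u_ge0 : (0 <= uvec P K A x)%E.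
  by rewrite uvec_series; apply: nneseries_ge0 => m _ _; rewrite lee_fin hit_prob_ge0.
have uE : uvec P K A x = (absorb x)%:E.
  by rewrite /absorb fineK // ge0_fin_numE // (le_lt_trans u_le1) ?ltry.
by rewrite -!lee_fin -uE u_le1 u_ge0.
Qed.

Lemma absorb_ge0 x : 0 <= absorb x. Proof. by have [_ /andP[]] := uvecE x. Qed.
Lemma absorb_le1 x : absorb x <= 1. Proof. by have [_ /andP[]] := uvecE x. Qed.

Lemma absorb_first_step x :
  absorb x = \sum_(y <- enum_set K) P x y + \sum_(z <- enum_set B) P x z * absorb z.
Proof.
have hit0 m y : (0 <= (hit_prob y m)%:E)%E by rewrite lee_fin hit_prob_ge0.
apply: EFin_inj; rewrite -(uvecE x).1 uvec_series nneseries_recl // EFinD.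
congr (_ + _)%E.
rewrite -nneseries_addn //.
under eq_eseriesr => m _ do rewrite addn1 hit_probS -sumEFin.
under eq_eseriesr => m _ do under eq_bigr => z _ do rewrite EFinM.
rewrite nneseries_sum; last first.
  by move=> z m _; rewrite -EFinM lee_fin mulr_ge0 ?P_ge0 ?hit_prob_ge0.
rewrite -sumEFin; apply: eq_bigr => z _.
by rewrite nneseriesZl // -uvec_series (uvecE z).1 EFinM.
Qed.

Lemma absorb_defect_step a b : B b -> (1 - absorb b) * P a b <= 1 - absorb a.
Proof.
move=> Bb; have bB : b \in enum_set B by rewrite mem_enum_set // mem_set.
have defect_ge0 z : 0 <= P a z * (1 - absorb z).
  by rewrite mulr_ge0 ?P_ge0 ?subr_ge0 ?absorb_le1.
have := ler_sum_term bB (fun z _ => defect_ge0 z).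
under eq_bigr => z _ do rewrite mulrBr mulr1.
have := absorb_first_step a; have := sum_P_K_B_le1 a; rewrite sumrB; lra.
Qed.

(* [escape] = sum_(k in K) pi(k) P_k(T_A <= T_K). *)
Definition escape := \sum_(k <- enum_set K) pi k * (1 - absorb k).

Lemma escape_term_le k : K k -> pi k * (1 - absorb k) <= escape.
Proof.
move=> Kk; apply: (ler_sum_term (f := fun k => pi k * (1 - absorb k))).
  by rewrite mem_enum_set // mem_set.
by move=> y _; rewrite mulr_ge0 ?pi_ge0 ?subr_ge0 ?absorb_le1.
Qed.

Lemma escape_ge0 : 0 <= escape.
Proof. by apply: sumr_ge0 => k _; rewrite mulr_ge0 ?pi_ge0 ?subr_ge0 ?absorb_le1. Qed.

(* Averaging the first-step equation against [pi] turns [escape] into the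
   outflow of [pi] from [A] minus the nonnegative [sum_B (pi - pi P)(1 - absorb)]. *)
Lemma escape_le_outflow : escape <=
  \sum_(z <- enum_set A) pi z - \sum_(y <- enum_set A) pi y * \sum_(z <- enum_set A) P y z.
Proof.
pose inflow z := \sum_(y <- enum_set A) pi y * P y z.
have pi_absorb : \sum_(y <- enum_set A) pi y * absorb y =
    \sum_(z <- enum_set K) inflow z + \sum_(z <- enum_set B) inflow z * absorb z.
  under eq_bigr => y _ do rewrite absorb_first_step mulrDr !mulr_sumr.
  rewrite big_split /= [X in X + _]exchange_big [X in _ + X]exchange_big /=.
  congr (_ + _); apply: eq_bigr => z _; rewrite /inflow mulr_suml.
  by apply: eq_bigr => y _; rewrite mulrA.
have pi_inner : \sum_(y <- enum_set A) pi y * \sum_(z <- enum_set A) P y z =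
    \sum_(z <- enum_set K) inflow z + \sum_(z <- enum_set B) inflow z.
  by rewrite -sum_enum_A; under eq_bigr => y _ do rewrite mulr_sumr; rewrite exchange_big.
have B_defect : 0 <= \sum_(z <- enum_set B) (pi z - inflow z) * (1 - absorb z).
  apply: sumr_ge0 => z _; rewrite mulr_ge0 ?subr_ge0 ?absorb_le1 //.
  exact/sum_piP_le/enum_set_uniq.
have escapeE : escape = \sum_(k <- enum_set K) pi k - \sum_(k <- enum_set K) pi k * absorb k.
  by rewrite -sumrB; apply: eq_bigr => k _; rewrite mulrBr mulr1.
move: B_defect pi_absorb; rewrite pi_inner escapeE !sum_enum_A.
under eq_bigr => z _ do rewrite mulrBl !mulrBr !mulr1.
rewrite !sumrB; lra.
Qed.

End Absorption.

Section TiltedMeasure.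
Variables (K A S2 : set T) (p : T -> R).
Hypotheses (fA : finite_set A) (KA : K `<=` A) (K0 : K !=set0).
Hypothesis hS2 : K `<=` S2 /\ closed_comm_class (Sprime P K A) (Rmat P K A) S2.
Hypothesis hp : stationary_on S2 (Rmat P K A) p.
Hypothesis hirr : irreducible P.

Local Notation u := (absorb K A).
Local Notation Rm := (Rmat P K A).

Let S2_Sprime x : S2 x -> Sprime P K A x. Proof. exact: hS2.2.1. Qed.
Let fS2 : finite_set S2.
Proof. by apply: sub_finite_set fA => x /S2_Sprime[]. Qed.
Let inS2 x : (x \in enum_set S2) = (x \in S2). Proof. exact: mem_enum_set. Qed.

Lemma absorb_gt0 x : S2 x -> 0 < u x.
Proof. by move=> /S2_Sprime[_]; rewrite (uvecE fA KA x).1 lte_fin. Qed.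

Lemma Rmat_S2 x y : S2 x -> S2 y ->
  Rm x y = if `[< K y >] then P x y / u x else P x y * u y / u x.
Proof.
by move=> Sx Sy; rewrite /Rmat /= (asboolT (S2_Sprime Sx)) (asboolT (S2_Sprime Sy)).
Qed.

Lemma Rmat_gt0 x y : 0 < Rm x y -> Sprime P K A y /\ 0 < P x y.
Proof.
rewrite /Rmat /=; have [Sy|nSy] := pselect (Sprime P K A y); last first.
  by rewrite (asboolF nSy) andbF ltxx.
move=> Rxy; split => //; rewrite lt_def P_ge0 // andbT; apply: contraTneq Rxy => ->.
by rewrite !mul0r !if_same ltxx.
Qed.

Lemma last_path_S2 x s : S2 x -> path (fun a b => 0 < Rm a b) x s -> S2 (last x s).
Proof.
elim: s x => [//|y s IH] x Sx /= /andP[Rxy]; apply: IH.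
exact: hS2.2.2.2.2 x y Sx (Rmat_gt0 Rxy).1 Rxy.
Qed.

Lemma p_ge0 x : 0 <= p x. Proof. exact: hp.1. Qed.

Lemma sum_p : \sum_(x <- enum_set S2) p x = 1.
Proof.
apply: EFin_inj; rewrite -sumEFin -esum_enum_set ?hp.2.2.1 // => x _.
by rewrite lee_fin p_ge0.
Qed.

(* On [S2], [p * Rm] unfolds to the [P]-flow of the tilted measure [p / u]. *)
Definition tilt x := p x / u x.

Lemma tilt_ge0 x : 0 <= tilt x.
Proof. by rewrite divr_ge0 ?p_ge0 ?absorb_ge0. Qed.

Lemma tilt_out x : ~ S2 x -> tilt x = 0.
Proof. by move=> nSx; rewrite /tilt hp.2.1 // mul0r. Qed.

Lemma absorb_tilt x : u x * tilt x = p x.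
Proof.
have [Sx|nSx] := pselect (S2 x); last by rewrite tilt_out // mulr0 hp.2.1.
by rewrite /tilt mulrCA divff ?mulr1 // gt_eqF // absorb_gt0.
Qed.

Lemma tilt_invariant b : S2 b ->
  \sum_(x <- enum_set S2) tilt x * P x b = (if `[< K b >] then u b else 1) * tilt b.
Proof.
move=> Sb; have ub := absorb_gt0 Sb.
set c := if `[< K b >] then 1 else u b.
have c_ge0 : 0 <= c by rewrite /c; case: ifP; rewrite ?absorb_ge0.
have pR x : S2 x -> p x * Rm x b = c * (tilt x * P x b).
  move=> Sx; have := absorb_gt0 Sx; rewrite Rmat_S2 // /c /tilt.
  by case: ifP => _ ux; field; rewrite gt_eqF.
have : \sum_(x <- enum_set S2) p x * Rm x b = p b.
  apply: EFin_inj; rewrite -sumEFin -esum_enum_set ?(hp.2.2.2 b Sb) // => x Sx.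
  by rewrite lee_fin (pR x Sx) mulr_ge0 // mulr_ge0 ?tilt_ge0 ?P_ge0.
rewrite (eq_big_seq (fun x => c * (tilt x * P x b))); last first.
  by move=> x; rewrite inS2 => /set_mem /pR.
rewrite -mulr_sumr /c /tilt; case: ifP => _ => [|<-]; rewrite mul1r.
  by move=> ->; rewrite mulrCA divff ?gt_eqF ?mulr1.
by rewrite mulrAC divff ?gt_eqF ?mul1r.
Qed.

Lemma tilt_inflow_ge b :
  (if `[< K b >] then u b else 1) * tilt b <= \sum_(x <- enum_set S2) tilt x * P x b.
Proof.
have [Sb|nSb] := pselect (S2 b); first by rewrite tilt_invariant.
by rewrite tilt_out // mulr0 sumr_ge0 // => x _; rewrite mulr_ge0 ?tilt_ge0 ?P_ge0.
Qed.

Definition ratio x := tilt x / pi x.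

Lemma ratio_ge0 x : 0 <= ratio x.
Proof. by rewrite divr_ge0 ?tilt_ge0 ?pi_ge0. Qed.

Lemma tiltE x : tilt x = ratio x * pi x.
Proof. by rewrite /ratio divfK // gt_eqF // pi_gt0. Qed.

Section RatioMaximum.
Variable M : R.
Hypothesis ratio_le : forall x, S2 x -> ratio x <= M.

(* Maximum principle: off [K], [tilt] is [P]-invariant while [pi] is only
   subinvariant, so a maximum of [ratio] propagates to every predecessor. *)
Lemma ratio_max_pred x y : S2 y -> ~ K y -> ratio y = M -> S2 x -> 0 < P x y ->
  ratio x = M.
Proof.
move=> Sy nKy ry Sx Pxy; apply/eqP; rewrite eq_le ratio_le //=.
have flow : \sum_(z <- enum_set S2) ratio z * (pi z * P z y) = M * pi y.
  have := tilt_invariant Sy; rewrite (asboolF nKy) mul1r tiltE ry => <-.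
  by apply: eq_bigr => z _; rewrite tiltE mulrA.
have gap_le0 : \sum_(z <- enum_set S2) (M - ratio z) * (pi z * P z y) <= 0.
  under eq_bigr => z _ do rewrite mulrBl.
  rewrite sumrB flow -mulr_sumr subr_le0 ler_wpM2l ?sum_piP_le ?enum_set_uniq //.
  by rewrite -ry ratio_ge0.
have gap_x : (M - ratio x) * (pi x * P x y) <= 0.
  apply: le_trans gap_le0.
  apply: (ler_sum_term (f := fun z => (M - ratio z) * (pi z * P z y))).
    by rewrite inS2 mem_set.
  move=> z; rewrite inS2 => /set_mem Sz.
  by rewrite mulr_ge0 ?mulr_ge0 ?pi_ge0 ?P_ge0 // subr_ge0 ratio_le.
by move: gap_x; rewrite pmulr_lle0 ?subr_le0 // mulr_gt0 // pi_gt0.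
Qed.

Lemma ratio_max_in_K y : S2 y -> ratio y = M -> exists2 k0, K k0 & ratio k0 = M.
Proof.
have [k Kk] := K0; have Sk : S2 k by exact: hS2.1.
move=> Sy ry; have [s [+ ls]] := hS2.2.2.2.1 k y Sk Sy.
elim/last_ind: s y Sy ry ls => [|s z IH] y Sy ry /=.
  by move=> ky _; exists k; rewrite // ky.
rewrite last_rcons => zy; subst z; rewrite rcons_path => /andP[ps Rsy].
have [Ky|nKy] := pselect (K y); first by exists y.
have Sl := last_path_S2 Sk ps.
exact: IH Sl (ratio_max_pred Sy nKy ry Sl (Rmat_gt0 Rsy).2) erefl ps.
Qed.

Lemma ratio_max_ge1 : 1 <= M.
Proof.
have [k Kk] := K0; have M0 : 0 <= M := le_trans (ratio_ge0 k) (ratio_le (hS2.1 k Kk)).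
have := ler_wpM2l M0 (sum_pi_le1 (enum_set_uniq S2)); rewrite mulr1 -sum_p.
apply: le_trans.
rewrite mulr_sumr big_seq [leRHS]big_seq ler_sum // => x; rewrite inS2 => /set_mem Sx.
rewrite -absorb_tilt tiltE mulrA ler_wpM2r ?pi_ge0 //.
by rewrite (le_trans _ (ratio_le Sx)) // ler_piMl ?ratio_ge0 ?absorb_le1.
Qed.

End RatioMaximum.

Lemma exists_ratio_argmax : exists2 y, S2 y & forall x, S2 x -> ratio x <= ratio y.
Proof.
have [k Kk] := K0; have kS : k \in enum_set S2 by rewrite inS2 mem_set //; exact: hS2.1.
have [y yS ymax] := exists_argmax_seq ratio kS.
exists y => [|x Sx]; first by move: yS; rewrite inS2 => /set_mem.
by apply: ymax; rewrite inS2 mem_set.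
Qed.

Lemma exists_minorant : exists2 k0, K k0 & exists w : T -> R,
  [/\ forall x, 0 <= w x <= pi x, w k0 = pi k0, forall x, u x * w x <= p x &
      forall a b, (pi a - w a) * P a b <= pi b - w b + escape K A].
Proof.
have [y Sy ymax] := exists_ratio_argmax; set M := ratio y in ymax.
have [k0 Kk0 rk0] := ratio_max_in_K ymax Sy erefl.
have M1 := ratio_max_ge1 ymax; have M0 : 0 < M := lt_le_trans ltr01 M1.
pose w x := tilt x / M.
have w_le_pi x : w x <= pi x.
  have [Sx|nSx] := pselect (S2 x); last by rewrite /w tilt_out ?mul0r ?pi_ge0.
  by rewrite ler_pdivrMr // tiltE mulrC ler_wpM2l ?pi_ge0 ?ymax.
have wb x : 0 <= w x <= pi x by rewrite w_le_pi divr_ge0 ?tilt_ge0 ?ltW.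
have w_out x : ~ S2 x -> w x = 0 by move=> nSx; rewrite /w tilt_out ?mul0r.
have inflow_w b : w b - escape K A <= \sum_(x <- enum_set S2) w x * P x b.
  apply: le_trans (_ : (if `[< K b >] then u b else 1) * w b <= _); last first.
    under eq_bigr => x _ do rewrite mulrAC.
    rewrite -mulr_suml /w mulrA; apply: ler_wpM2r; rewrite ?invr_ge0 ?(ltW M0) //.
    exact: tilt_inflow_ge.
  case: ifP => [/asboolP Kb|_]; last by rewrite mul1r lerBlDr lerDl escape_ge0.
  rewrite lerBlDr -lerBlDl -{1}[w b]mul1r -mulrBl.
  apply: le_trans (escape_term_le fA KA Kb).
  by rewrite mulrC ler_wpM2r ?subr_ge0 ?absorb_le1.
exists k0 => //; exists w; split => //.
- by rewrite /w tiltE rk0 mulrAC divff ?mul1r ?gt_eqF.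
- by move=> x; rewrite mulrA absorb_tilt ler_pdivrMr // ler_peMr ?p_ge0.
move=> a b; have := pi_minorant_step a b fS2 wb w_out; have := inflow_w b; lra.
Qed.

End TiltedMeasure.

Section LowerBound.
Variable K : set T.
Hypotheses (K0 : K !=set0) (hirr : irreducible P).

(* The constant only depends on fixed positive paths from [y] into [K], so it
   is uniform in [A]. *)
Lemma stationary_Rmat_lower_bound y : exists2 C : R, 0 <= C &
  forall (A S2 : set T) (p : T -> R), finite_set A -> K `<=` A ->
    K `<=` S2 /\ closed_comm_class (Sprime P K A) (Rmat P K A) S2 ->
    stationary_on S2 (Rmat P K A) p ->
    pi y - C * escape K A - (1 - absorb K A y) <= p y.
Proof.
have /choice[C HC] k : exists C : R, 0 <= C /\ forall (d : T -> R) (e : R),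
    (forall a b, d a * P a b <= d b + e) -> (forall z, 0 <= d z) -> 0 <= e ->
    d y <= C * (d k + e).
  by have [s [/path_backward_bound[C C0 HC] <-]] := hirr y k; exists C.
have C_ge0 k : 0 <= C k := (HC k).1.
exists (\sum_(k <- enum_set K) C k); first exact: sumr_ge0.
move=> A S2 p fA KA hS2 hp.
have [k0 Kk0 [w [wb wk0 uw step]]] := exists_minorant fA KA K0 hS2 hp hirr.
have e0 := escape_ge0 fA KA; have [u0 u1] := (absorb_ge0 fA KA y, absorb_le1 fA KA y).
have piw_y : pi y - w y <= C k0 * escape K A.
  have piw_ge0 z : 0 <= pi z - w z by have /andP[_] := wb z; rewrite subr_ge0.
  by have := (HC k0).2 _ _ step piw_ge0 e0; rewrite wk0 subrr add0r.
have Ck0 : C k0 <= \sum_(k <- enum_set K) C k.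
  apply: ler_sum_term => //; rewrite mem_enum_set ?mem_set //.
  exact: sub_finite_set KA fA.
have uw_ge : absorb K A y * (pi y - C k0 * escape K A) <= absorb K A y * w y.
  by rewrite ler_wpM2l // lerBlDr -lerBlDl.
have : 0 <= (1 - absorb K A y) * (1 - pi y) by rewrite mulr_ge0 ?subr_ge0 ?pi_le1.
have : 0 <= (\sum_(k <- enum_set K) C k - C k0) * escape K A by rewrite mulr_ge0 ?subr_ge0.
have : 0 <= (1 - absorb K A y) * (C k0 * escape K A) by rewrite !mulr_ge0 ?subr_ge0.
have := uw y; nra.
Qed.

End LowerBound.

Section Convergence.
Variables (K : set T) (A : nat -> set T).
Hypotheses (K0 : K !=set0) (hirr : irreducible P).
Hypotheses (hAfin : forall n, finite_set (A n)) (hKA : forall n, K `<=` A n).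
Hypotheses (hAmono : forall n, A n `<=` A n.+1) (hAcov : \bigcup_n A n = [set: T]).

Local Notation u n := (absorb K (A n)).
Local Notation e n := (escape K (A n)).

Lemma A_mono m n : (m <= n)%N -> A m `<=` A n.
Proof.
elim: n => [|n IH]; first by rewrite leqn0 => /eqP->.
by rewrite leq_eqVlt ltnS => /orP[/eqP->//|/IH/subset_trans]; apply.
Qed.

Lemma near_in_A y : \forall n \near \oo, A n y.
Proof.
have [N _ ANy] : (\bigcup_n A n) y by rewrite hAcov.
by apply: filterS (nbhs_infty_ge N) => n /A_mono; apply.
Qed.

Lemma near_subset_A (s : seq T) : \forall n \near \oo, {subset s <= enum_set (A n)}.
Proof.
apply: filterS (near_all_seq (s := s) (fun y _ => near_in_A y)) => n sA y ys.
by rewrite mem_enum_set //; exact: mem_set (sA y ys).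
Qed.

Lemma near_sum_P_ge y eps : 0 < eps ->
  \forall n \near \oo, 1 - eps <= \sum_(z <- enum_set (A n)) P y z.
Proof.
move=> eps0; have [s us /ltW s_gt] := sum_P_gt y eps0.
apply: filterS (near_subset_A s) => n sA; apply: le_trans s_gt _.
by apply: ler_sum_subseq; rewrite ?enum_set_uniq // => z _; exact: P_ge0.
Qed.

Lemma near_inner_mass eps : 0 < eps -> \forall n \near \oo,
  1 - eps <= \sum_(y <- enum_set (A n)) pi y * \sum_(z <- enum_set (A n)) P y z.
Proof.
move=> eps0; have d0 : 0 < eps / 2 by rewrite divr_gt0.
have [s us s_gt] := sum_pi_gt d0.
have mass_ge0 n y : 0 <= pi y * \sum_(z <- enum_set (A n)) P y z.
  by rewrite mulr_ge0 ?pi_ge0 ?sumr_ge0 // => z _; exact: P_ge0.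
near=> n.
have sA : {subset s <= enum_set (A n)} by near: n; exact: near_subset_A.
have PA : forall y, y \in s -> 1 - eps / 2 <= \sum_(z <- enum_set (A n)) P y z.
  by near: n; exact: near_all_seq (fun y _ => near_sum_P_ge y d0).
apply: le_trans (ler_sum_subseq us (enum_set_uniq _) sA (fun y _ => mass_ge0 n y)).
have : (1 - eps / 2) * \sum_(y <- s) pi y <=
    \sum_(y <- s) pi y * \sum_(z <- enum_set (A n)) P y z.
  rewrite mulr_sumr big_seq [leRHS]big_seq ler_sum // => y ys.
  by rewrite mulrC ler_wpM2l ?pi_ge0 ?PA.
have := sum_pi_le1 us; have : eps = eps / 2 * 2 by rewrite divfK.
nra.
Unshelve. all: by end_near.
Qed.

Lemma escape_cvg eps : 0 < eps -> \forall n \near \oo, e n <= eps.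
Proof.
move=> eps0; near=> n; apply: le_trans (escape_le_outflow (hAfin n) (hKA n)) _.
have := sum_pi_le1 (enum_set_uniq (A n)).
have : 1 - eps <= \sum_(y <- enum_set (A n)) pi y * \sum_(z <- enum_set (A n)) P y z.
  by near: n; exact: near_inner_mass.
lra.
Unshelve. all: by end_near.
Qed.

(* Between the last visit to [K] and [y] the path stays in [A n `\` K], where
   [1 - u n] is superharmonic (absorb_defect_step). *)
Lemma absorb_defect_le_K y : exists2 k, K k & exists2 C : R, 0 <= C &
  \forall n \near \oo, 1 - u n y <= C * (1 - u n k).
Proof.
have [Ky|nKy] := pselect (K y).
  by exists y => //; exists 1 => //; apply: nearW => n; rewrite mul1r.
have [k Kk] := K0; have [s [ps ls]] := hirr k y.
have [k' [s' [Kk' s'K ps' ls']]] := path_last_visit (fun z => z \in K) ps.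
have {}Kk' : K k' by case: Kk' => [->|/set_mem].
have [C C0 HC] := path_forward_bound ps'; exists k' => //; exists C => //.
apply: filterS (near_subset_A s') => n s'A.
rewrite -ls -ls' -[1 - u n k']addr0.
apply: (HC (fun z => 1 - u n z) 0 (fun b => b \in A n `\` K)) => //.
- by move=> a b /set_mem Bb; rewrite addr0 absorb_defect_step.
- apply/allP => z zs; apply/mem_set; split.
    by have := s'A z zs; rewrite mem_enum_set // => /set_mem.
  by move: (allP s'K z zs) => /= /negP zK /mem_set.
- by move=> z; rewrite subr_ge0 absorb_le1.
Qed.

Lemma absorb_cvg y eps : 0 < eps -> \forall n \near \oo, 1 - u n y <= eps.
Proof.
move=> eps0; have [k Kk [C C0 near_le]] := absorb_defect_le_K y.
have pik := pi_gt0 hirr k; have C1 : 0 < C + 1 by rewrite ltr_wpDl.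
have d0 : 0 < eps / (C + 1) * pi k by rewrite !mulr_gt0 ?invr_gt0.
near=> n.
have e_le : e n <= eps / (C + 1) * pi k by near: n; exact: escape_cvg.
have := escape_term_le (hAfin n) (hKA n) Kk.
have : eps / (C + 1) * (C + 1) = eps by rewrite divfK ?gt_eqF.
have : 1 - u n y <= C * (1 - u n k) by near: n.
have := absorb_le1 (hAfin n) (hKA n) k; nra.
Unshelve. all: by end_near.
Qed.

Lemma stationary_Rmat_liminf (S2 : nat -> set T) (p : nat -> T -> R) :
  (forall n, K `<=` S2 n /\ closed_comm_class (Sprime P K (A n)) (Rmat P K (A n)) (S2 n)) ->
  (forall n, stationary_on (S2 n) (Rmat P K (A n)) (p n)) ->
  forall y eps, 0 < eps -> \forall n \near \oo, pi y - eps <= p n y.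
Proof.
move=> hS2 hp y eps eps0; have [C C0 lower] := stationary_Rmat_lower_bound K0 hirr y.
have C1 : 0 < C + 1 by rewrite ltr_wpDl.
near=> n; have := lower _ _ _ (hAfin n) (hKA n) (hS2 n) (hp n).
have : 1 - u n y <= eps / 2 by near: n; apply: absorb_cvg; rewrite divr_gt0.
have : e n <= eps / 2 / (C + 1) by near: n; apply: escape_cvg; rewrite !divr_gt0.
have : eps / 2 / (C + 1) * (C + 1) = eps / 2 by rewrite divfK ?gt_eqF.
have := escape_ge0 (hAfin n) (hKA n); nra.
Unshelve. all: by end_near.
Qed.

End Convergence.

End Chain.

Theorem theorem5p2 (R : realType) (T : countType) (P : T -> T -> R) (piS : T -> R)
  (K : set T) (A : nat -> set T)
  (hP : stochastic P) (hirr : irreducible P) (hpr : positive_recurrent P)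
  (hpi : stationary_distribution P piS)
  (hKfin : finite_set K) (hK0 : K !=set0)
  (hAfin : forall n, finite_set (A n)) (hKA : forall n, K `<=` A n)
  (hAmono : forall n, A n `<=` A n.+1) (hAcov : \bigcup_n A n = [set: T])
  (hG : forall n, irreducible_on K (Gmat P K (A n)))
  (S2 : nat -> set T) (pi3 : nat -> T -> R)
  (hS2 : forall n, K `<=` S2 n /\
          closed_comm_class (Sprime P K (A n)) (Rmat P K (A n)) (S2 n))
  (hpi3 : forall n, stationary_on (S2 n) (Rmat P K (A n)) (pi3 n)) :
  forall x : T, (fun n => pi3 n x) @ \oo --> piS x.
Proof.
have liminf := stationary_Rmat_liminf hP hpi hK0 hirr hAfin hKA hAmono hAcov hS2 hpi3.
apply: cvg_of_liminf_ge hpi.1 hpi.2.1 _ liminf => n s.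
exact: sum_stationary_on_le1 (hpi3 n).
Qed.
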